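(* Let $\alpha\in[0,1)\cup(1,2]$ and $c>0$, and let $s_{\alpha,c}$ be the SIGTRON function defined below. For $z\ge0$ and $b>0$ let $F(z;b)=\int_0^z\frac{1}{1+t^{1/b}}\,dt$. Define $L^S_{\alpha,c}:\mathbb R\to\mathbb R$ as follows. (1) If $\alpha\in(1,2]$: $L^S_{\alpha,c}(x)=-c_\alpha F\!\left(1+\frac{x}{c_\alpha};\alpha-1\right)+c_\alpha$ for $x\ge -c_\alpha$, and $L^S_{\alpha,c}(x)=-x$ otherwise. (2) If $\alpha\in[0,1)$: $L^S_{\alpha,c}(x)=c_\alpha F\!\left(1+\frac{x}{c_\alpha};1-\alpha\right)-c_\alpha-x$ for $x\le -c_\alpha$, and $L^S_{\alpha,c}(x)=0$ otherwise. Then $L^S_{\alpha,c}$ is differentiable on $\mathbb R$ and satisfies $\nabla L^S_{\alpha,c}(x)=s_{\alpha,c}(x)-1$ for all $x\in\mathbb R$ (so $L^S_{\alpha,c}$ is, up to an additive constant, the virtual SIGTRON-induced loss function, i.e. the function whose derivative is $s_{\alpha,c}-1$).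
   Context: For $c>0$ and $\alpha\ne1$, $c_\alpha=\frac{1}{\alpha-1}c^{1-\alpha}$ (so $c_\alpha>0$ for $\alpha>1$ and $c_\alpha<0$ for $\alpha<1$). The extended exponential is $\exp_{\alpha,c}(x)=c\left(1-\frac{x}{c_\alpha}\right)^{1/(1-\alpha)}$ with domain $\{x\ge c_\alpha\}$ if $0\le\alpha<1$ and $\{x<c_\alpha\}$ if $\alpha>1$. The extended asymmetric sigmoid is $\sigma_{\alpha,c}(x)=\frac{c}{c+\exp_{\alpha,c}(-x)}$ with domain $\{x\le -c_\alpha\}$ if $0\le\alpha<1$ and $\{x\ge -c_\alpha\}$ if $\alpha>1$ (with $\sigma_{\alpha,c}(-c_\alpha)=0$ for $\alpha>1$). SIGTRON is $s_{\alpha,c}(x)=\sigma_{\alpha,c}(x)$ for $x\in\mathrm{dom}(\sigma_{\alpha,c})$ and $s_{\alpha,c}(x)=\sigma_P(x)$ otherwise, where $\sigma_P(x)=1$ if $x\ge0$ and $0$ otherwise. The virtual SIGTRON-induced loss $L^S_{\alpha,c}$ is defined by the gradient equation $\nabla L^S_{\alpha,c}(x)=s_{\alpha,c}(x)-1$. *)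

From Stdlib Require Import Reals Lra.
From Coquelicot Require Import Coquelicot.
Open Scope R_scope.

(* real power t^y for t >= 0, with the convention 0^y = 0 (used only for y > 0
   or where the base is positive); Rpower itself is only meaningful for t > 0 *)
Definition rpow (t y : R) : R := if Rle_dec t 0 then 0 else Rpower t y.

Definition c_al (al c : R) : R := / (al - 1) * Rpower c (1 - al).

(* extended exponential exp_{alpha,c}(x) = c (1 - x/c_alpha)^(1/(1-alpha)),
   meaningful on its domain {x >= c_alpha} (alpha<1) / {x < c_alpha} (alpha>1) *)
Definition exp_ext (al c x : R) : R :=
  c * rpow (1 - x / c_al al c) (/ (1 - al)).

Definition sig_dom (al c x : R) : Prop :=
  (0 <= al < 1 /\ x <= - c_al al c) \/ (1 < al /\ x >= - c_al al c).

Definition sigma_ext (al c x : R) : R :=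
  if Rlt_dec 1 al then
    (if Req_EM_T x (- c_al al c) then 0 else c / (c + exp_ext al c (- x)))
  else c / (c + exp_ext al c (- x)).

Definition sigma_P (x : R) : R := if Rle_dec 0 x then 1 else 0.

Definition sigtron (al c x : R) : R :=
  if Rlt_dec 1 al then
    (if Rge_dec x (- c_al al c) then sigma_ext al c x else sigma_P x)
  else if Rle_dec 0 al then
    (if Rlt_dec al 1 then
       (if Rle_dec x (- c_al al c) then sigma_ext al c x else sigma_P x)
     else sigma_P x)
  else sigma_P x.

Definition Fint (z b : R) : R :=
  RInt (fun t => 1 / (1 + rpow t (/ b))) 0 z.

Definition LS (al c x : R) : R :=
  if Rlt_dec 1 al then
    (if Rle_dec (- c_al al c) x
     then - c_al al c * Fint (1 + x / c_al al c) (al - 1) + c_al al c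
     else - x)
  else
    (if Rle_dec x (- c_al al c)
     then c_al al c * Fint (1 + x / c_al al c) (1 - al) - c_al al c - x
     else 0).

(* Write [u = 1 + x / c_alpha] and [g_b(u) = 1 / (1 + u^(1/b))] (with [g_b = 1] on
   [u <= 0]); [g_b] is continuous, so [F(.; b)] is an antiderivative of it.
   For [x] beyond [-c_alpha] one has [u <= 0], where [F(u; b) = u] and [L^S] is
   affine; hence on all of [R] the loss is the single expression
   [+-c_alpha F(u; b) + affine], whose derivative is [+-g_b(u) + const].  It remains
   to identify this with [s_{alpha,c} - 1] pointwise: [sigma_{alpha,c}(x)] equals
   [g_b(u)] for [alpha < 1] and [1 - g_b(u)] for [alpha > 1], and on the
   complement of the domain both sides reduce to the perceptron value. *)
From Stdlib Require Import Reals Lra.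
From Coquelicot Require Import Coquelicot.
Open Scope R_scope.

Lemma rpow_nonpos t y : t <= 0 -> rpow t y = 0.
Proof. intros Ht; unfold rpow; destruct (Rle_dec t 0); [reflexivity | lra]. Qed.

Lemma rpow_pos t y : 0 < t -> rpow t y = Rpower t y.
Proof. intros Ht; unfold rpow; destruct (Rle_dec t 0); [lra | reflexivity]. Qed.

Lemma rpow_ge0 t y : 0 <= rpow t y.
Proof.
  unfold rpow; destruct (Rle_dec t 0); [lra |].
  left; apply exp_pos.
Qed.

Lemma continuous_rpow y t : 0 < y -> continuous (fun u => rpow u y) t.
Proof.
  intros Hy.
  destruct (Rtotal_order t 0) as [Hneg | [-> | Hpos]].
  - apply continuous_ext_loc with (fun _ => 0); [| apply continuous_const].
    apply (filter_imp (fun u => u < 0)); [| exact (open_lt 0 t Hneg)].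
    intros u Hu; rewrite rpow_nonpos; [reflexivity | lra].
  - apply filterlim_locally; intros eps.
    (* below [eps^(1/y)] the power [u^y] stays below [eps] *)
    apply (filter_imp (fun u => u < Rpower eps (/ y))).
    2: exact (open_lt _ 0 (exp_pos _)).
    intros u Hu.
    change (Rabs (rpow u y - rpow 0 y) < eps).
    rewrite (rpow_nonpos 0) by lra; rewrite Rminus_0_r.
    destruct (Rle_dec u 0) as [Hu0 | Hu0].
    + rewrite rpow_nonpos, Rabs_R0 by lra; apply cond_pos.
    + rewrite rpow_pos by lra.
      rewrite Rabs_pos_eq by (left; apply exp_pos).
      replace (pos eps) with (Rpower (Rpower eps (/ y)) y).
      * apply Rlt_Rpower_l; lra.
      * rewrite Rpower_mult, Rinv_l, Rpower_1 by (try apply cond_pos; lra).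
        reflexivity.
  - apply continuous_ext_loc with (fun u => exp (y * ln u)).
    + apply (filter_imp (fun u => 0 < u)); [| exact (open_gt 0 t Hpos)].
      intros u Hu; rewrite rpow_pos; [reflexivity | exact Hu].
    + apply continuous_exp_comp.
      apply (continuous_mult (fun _ => y) ln); [apply continuous_const |].
      apply continuous_ln, Hpos.
Qed.

Definition Fint_integrand (b t : R) : R := 1 / (1 + rpow t (/ b)).

Lemma continuous_Fint_integrand b t : 0 < b -> continuous (Fint_integrand b) t.
Proof.
  intros Hb; unfold Fint_integrand, Rdiv.
  apply (continuous_mult (fun _ => 1)); [apply continuous_const |].
  apply continuous_Rinv_comp.
  - apply (continuous_plus (fun _ => 1)); [apply continuous_const |].
    apply continuous_rpow, Rinv_0_lt_compat, Hb.
  - pose proof (rpow_ge0 t (/ b)); lra.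
Qed.

Lemma Fint_nonpos z b : z <= 0 -> Fint z b = z.
Proof.
  intros Hz; unfold Fint.
  rewrite (RInt_ext _ (fun _ => 1)).
  - rewrite RInt_const; unfold scal; simpl; unfold mult; simpl; ring.
  - intros t Ht; rewrite Rmin_right, Rmax_left in Ht by lra.
    rewrite rpow_nonpos by lra; change (1 / (1 + 0) = 1); field.
Qed.

Lemma is_derive_Fint z b : 0 < b -> is_derive (fun z => Fint z b) z (Fint_integrand b z).
Proof.
  intros Hb; unfold Fint.
  apply (is_derive_RInt (Fint_integrand b) _ 0); [| apply continuous_Fint_integrand, Hb].
  exists (mkposreal 1 Rlt_0_1); intros w _.
  apply (RInt_correct (V := R_CompleteNormedModule)), ex_RInt_continuous.
  intros; apply continuous_Fint_integrand, Hb.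
Qed.

Lemma is_derive_Fint_affine s k p q b x : 0 < b -> k <> 0 ->
  is_derive (fun t => s * Fint (1 + t / k) b + p * t + q) x
    (s / k * Fint_integrand b (1 + x / k) + p).
Proof.
  intros Hb Hk.
  assert (Hin : is_derive (fun t => 1 + t / k) x (/ k)) by (auto_derive; [easy | field; easy]).
  pose proof (is_derive_comp _ _ x _ _ (is_derive_Fint (1 + x / k) b Hb) Hin) as Hcomp.
  assert (Haff : is_derive (fun t => p * t + q) x p) by (auto_derive; [easy | ring]).
  pose proof (is_derive_plus _ _ _ _ _ (is_derive_scal _ _ s _ Hcomp) Haff) as Hsum.
  replace (s / k * Fint_integrand b (1 + x / k) + p)
    with (s * (/ k * Fint_integrand b (1 + x / k)) + p) by (unfold Rdiv; ring).
  eapply is_derive_ext; [| exact Hsum].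
  intros t; simpl; unfold plus; simpl; ring.
Qed.

Lemma c_al_pos al c : 1 < al -> 0 < c_al al c.
Proof.
  intros Hal; unfold c_al.
  apply Rmult_lt_0_compat; [apply Rinv_0_lt_compat; lra | apply exp_pos].
Qed.

Lemma c_al_neg al c : al < 1 -> c_al al c < 0.
Proof.
  intros Hal; unfold c_al.
  pose proof (Rinv_lt_0_compat (al - 1) ltac:(lra)).
  pose proof (exp_pos ((1 - al) * ln c)); unfold Rpower; nra.
Qed.

Lemma one_add_div_mul k x : k <> 0 -> (1 + x / k) * k = x + k.
Proof. intros Hk; field; exact Hk. Qed.

Lemma exp_ext_opp al c x :
  exp_ext al c (- x) = c * rpow (1 + x / c_al al c) (/ (1 - al)).
Proof. unfold exp_ext, Rdiv; f_equal; f_equal; ring. Qed.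

Lemma LS_gt1 al c x : 1 < al ->
  LS al c x = c_al al c - c_al al c * Fint (1 + x / c_al al c) (al - 1).
Proof.
  intros Hal; pose proof (c_al_pos al c Hal) as Hk.
  unfold LS; destruct (Rlt_dec 1 al) as [_ | ]; [| lra].
  destruct (Rle_dec (- c_al al c) x); [ring |].
  pose proof (one_add_div_mul (c_al al c) x ltac:(lra)).
  rewrite Fint_nonpos by nra; field; lra.
Qed.

Lemma LS_lt1 al c x : al < 1 ->
  LS al c x = c_al al c * Fint (1 + x / c_al al c) (1 - al) - c_al al c - x.
Proof.
  intros Hal; pose proof (c_al_neg al c Hal) as Hk.
  unfold LS; destruct (Rlt_dec 1 al); [lra |].
  destruct (Rle_dec x (- c_al al c)); [reflexivity |].
  pose proof (one_add_div_mul (c_al al c) x ltac:(lra)).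
  rewrite Fint_nonpos by nra; field; lra.
Qed.

Lemma sigtron_gt1 al c x : 1 < al -> 0 < c ->
  sigtron al c x = 1 - Fint_integrand (al - 1) (1 + x / c_al al c).
Proof.
  intros Hal Hc; pose proof (c_al_pos al c Hal) as Hk.
  pose proof (one_add_div_mul (c_al al c) x ltac:(lra)) as Hu.
  unfold sigtron, sigma_ext, Fint_integrand.
  destruct (Rlt_dec 1 al) as [_ | ]; [| lra].
  destruct (Rge_dec x (- c_al al c)) as [Hdom | Hout].
  - destruct (Req_EM_T x (- c_al al c)) as [Hedge | Hin].
    + rewrite rpow_nonpos by nra; field.
    + rewrite exp_ext_opp, !rpow_pos by nra.
      replace (/ (1 - al)) with (- / (al - 1)) by (field; lra).
      rewrite Rpower_Ropp.
      pose proof (exp_pos (/ (al - 1) * ln (1 + x / c_al al c))).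
      unfold Rpower in *; field; split; [| split]; nra.
  - unfold sigma_P; destruct (Rle_dec 0 x); [lra |].
    rewrite rpow_nonpos by nra; field.
Qed.

Lemma sigtron_lt1 al c x : 0 <= al < 1 -> 0 < c ->
  sigtron al c x = Fint_integrand (1 - al) (1 + x / c_al al c).
Proof.
  intros Hal Hc; pose proof (c_al_neg al c (proj2 Hal)) as Hk.
  pose proof (one_add_div_mul (c_al al c) x ltac:(lra)) as Hu.
  unfold sigtron, sigma_ext, Fint_integrand.
  destruct (Rlt_dec 1 al); [lra |].
  destruct (Rle_dec 0 al); [| lra].
  destruct (Rlt_dec al 1); [| lra].
  destruct (Rle_dec x (- c_al al c)) as [Hdom | Hout].
  - destruct (Rlt_dec 1 al); [lra |].
    rewrite exp_ext_opp.
    pose proof (rpow_ge0 (1 + x / c_al al c) (/ (1 - al))).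
    field; split; nra.
  - unfold sigma_P; destruct (Rle_dec 0 x); [| lra].
    rewrite rpow_nonpos by nra; field.
Qed.

Theorem lemma1 (al c : R) :
  (0 <= al < 1 \/ 1 < al <= 2) -> 0 < c ->
  forall x : R, is_derive (LS al c) x (sigtron al c x - 1).
Proof.
  intros [Hal | Hal] Hc x.
  - pose proof (c_al_neg al c (proj2 Hal)) as Hk.
    apply (is_derive_ext
      (fun t => c_al al c * Fint (1 + t / c_al al c) (1 - al) + (-1) * t + - c_al al c)).
    { intros t; rewrite LS_lt1 by lra; simpl; ring. }
    rewrite sigtron_lt1 by assumption.
    replace (Fint_integrand (1 - al) (1 + x / c_al al c) - 1)
      with (c_al al c / c_al al c * Fint_integrand (1 - al) (1 + x / c_al al c) + -1)
      by (field; lra).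
    apply is_derive_Fint_affine; lra.
  - pose proof (c_al_pos al c (proj1 Hal)) as Hk.
    apply (is_derive_ext
      (fun t => - c_al al c * Fint (1 + t / c_al al c) (al - 1) + 0 * t + c_al al c)).
    { intros t; rewrite LS_gt1 by lra; simpl; ring. }
    rewrite sigtron_gt1 by lra.
    replace (1 - Fint_integrand (al - 1) (1 + x / c_al al c) - 1)
      with (- c_al al c / c_al al c * Fint_integrand (al - 1) (1 + x / c_al al c) + 0)
      by (field; lra).
    apply is_derive_Fint_affine; lra.
Qed.
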